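(* Let $(\mathfrak{g},[\cdot,\cdot]_{\mathfrak{g}})$ be a Leibniz algebra over a field $\mathbf{K}$, $(V;\rho^L,\rho^R)$ a representation, $T:V\to\mathfrak{g}$ a relative Rota-Baxter operator, and $T_t=\sum_{i=0}^n\mathfrak{T}_it^i$ an order $n$ deformation of $T$. Then $T_t$ is extendable if and only if the obstruction class $[\mathrm{Ob}_T]\in\mathcal{H}^2(V,\mathfrak{g})$ is trivial, where $\mathrm{Ob}_T(u,v)=\sum_{i+j=n+1,\ i,j\ge1}\big([\mathfrak{T}_iu,\mathfrak{T}_jv]_{\mathfrak{g}}-\mathfrak{T}_i(\rho^L(\mathfrak{T}_ju)v+\rho^R(\mathfrak{T}_jv)u)\big)$ for $u,v\in V$.
   Context: A Leibniz algebra is a vector space $\mathfrak{g}$ with bilinear $[\cdot,\cdot]_{\mathfrak{g}}$ satisfying $[x,[y,z]_{\mathfrak{g}}]_{\mathfrak{g}}=[[x,y]_{\mathfrak{g}},z]_{\mathfrak{g}}+[y,[x,z]_{\mathfrak{g}}]_{\mathfrak{g}}$. A representation $(V;\rho^L,\rho^R)$: linear $\rho^L,\rho^R:\mathfrak{g}\to\mathfrak{gl}(V)$ with $\rho^L([x,y]_{\mathfrak{g}})=[\rho^L(x),\rho^L(y)]$, $\rho^R([x,y]_{\mathfrak{g}})=[\rho^L(x),\rho^R(y)]$, $\rho^R(y)\rho^L(x)=-\rho^R(y)\rho^R(x)$. A relative Rota-Baxter operator is a linear $T:V\to\mathfrak{g}$ with $[Tv_1,Tv_2]_{\mathfrak{g}}=T(\rho^L(Tv_1)v_2+\rho^R(Tv_2)v_1)$.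 Cohomology of $T$: $C^n(V,\mathfrak{g})=\mathrm{Hom}(\otimes^nV,\mathfrak{g})$, $C^0=\mathfrak{g}$, $\partial_T:C^n\to C^{n+1}$, $(\partial_Tf)(v_1,\dots,v_{n+1})=\sum_{i=1}^n(-1)^{i+1}[Tv_i,f(v_1,\dots,\hat v_i,\dots,v_{n+1})]_{\mathfrak{g}}-\sum_{i=1}^n(-1)^{i+1}T\rho^R(f(v_1,\dots,\hat v_i,\dots,v_{n+1}))v_i+(-1)^{n+1}[f(v_1,\dots,v_n),Tv_{n+1}]_{\mathfrak{g}}+(-1)^nT\rho^L(f(v_1,\dots,v_n))v_{n+1}+\sum_{1\le i<j\le n+1}(-1)^if(v_1,\dots,\hat v_i,\dots,v_{j-1},\rho^L(Tv_i)v_j+\rho^R(Tv_j)v_i,v_{j+1},\dots,v_{n+1})$; $\mathcal{Z}^k=\ker\partial_T\cap C^k$, $\mathcal{B}^k=\partial_T(C^{k-1})$, $\mathcal{H}^k=\mathcal{Z}^k/\mathcal{B}^k$. (The 2-cochain $\mathrm{Ob}_T$ is a 2-cocycle, so $[\mathrm{Ob}_T]$ is defined.) An order $n$ deformation of $T$ is $T_t=\sum_{i=0}^n\mathfrak{T}_it^i$ with $\mathfrak{T}_0=T$, $\mathfrak{T}_i\in\mathrm{Hom}(V,\mathfrak{g})$, viewed as a $\mathbf{K}[t]/(t^{n+1})$-module map $V[t]/(t^{n+1})\to\mathfrak{g}[t]/(t^{n+1})$ (bracket and $\rho^L,\rho^R$ extended $\mathbf{K}[t]/(t^{n+1})$-bilinearly),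 such that $[T_t(u),T_t(v)]_{\mathfrak{g}}=T_t(\rho^L(T_t(u))v+\rho^R(T_t(v))u)$ for all $u,v\in V$. It is extendable if there is $\mathfrak{T}_{n+1}\in\mathrm{Hom}(V,\mathfrak{g})$ with $T_t+\mathfrak{T}_{n+1}t^{n+1}$ an order $n+1$ deformation of $T$. *)

From HB Require Import structures.
From mathcomp Require Import all_boot all_order all_algebra.
Set Implicit Arguments. Unset Strict Implicit. Unset Printing Implicit Defensive.
Import Order.TTheory GRing.Theory.
Local Open Scope ring_scope.

Section LeibnizRB.
Variables (K : fieldType) (g V : lmodType K).

Definition bilinear_map (A B C : lmodType K) (b : A -> B -> C) : Prop :=
  (forall y, linear (b^~ y)) /\ (forall x, linear (b x)).

Definition leibniz_algebra (br : g -> g -> g) : Prop :=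
  bilinear_map br /\
  forall x y z, br x (br y z) = br (br x y) z + br y (br x z).

Definition representation (br : g -> g -> g) (rhoL rhoR : g -> V -> V) : Prop :=
  bilinear_map rhoL /\ bilinear_map rhoR /\
  (forall x y v, rhoL (br x y) v = rhoL x (rhoL y v) - rhoL y (rhoL x v)) /\
  (forall x y v, rhoR (br x y) v = rhoL x (rhoR y v) - rhoR y (rhoL x v)) /\
  (forall x y v, rhoR y (rhoL x v) = - rhoR y (rhoR x v)).

Definition relative_RB (br : g -> g -> g) (rhoL rhoR : g -> V -> V) (T : V -> g)
  : Prop :=
  linear T /\
  forall v1 v2, br (T v1) (T v2) = T (rhoL (T v1) v2 + rhoR (T v2) v1).

(* n-cochains: maps (lists of n vectors) -> g, multilinear on lists of size n.
   Only the values on lists of size n matter. *)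
Definition multilinear (n : nat) (f : seq V -> g) : Prop :=
  forall (vs : seq V), size vs = n -> forall i, (i < n)%N ->
  forall (a : K) (x y : V),
    f (set_nth 0 vs i (a *: x + y)) = a *: f (set_nth 0 vs i x) + f (set_nth 0 vs i y).

Definition drop_nth (i : nat) (vs : seq V) : seq V := take i vs ++ drop i.+1 vs.

(* The coboundary operator d_T : C^n -> C^(n+1) (indices shifted to 0-based). *)
Definition dT (br : g -> g -> g) (rhoL rhoR : g -> V -> V) (T : V -> g)
  (n : nat) (f : seq V -> g) (vs : seq V) : g :=
  let v := fun i => nth 0 vs i in
  \sum_(0 <= i < n) ((-1) ^+ i *: br (T (v i)) (f (drop_nth i vs)))
  - \sum_(0 <= i < n) ((-1) ^+ i *: T (rhoR (f (drop_nth i vs)) (v i)))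
  + (-1) ^+ n.+1 *: br (f (take n vs)) (T (v n))
  + (-1) ^+ n *: T (rhoL (f (take n vs)) (v n))
  + \sum_(0 <= i < n.+1) \sum_(i.+1 <= j < n.+1)
      ((-1) ^+ i.+1 *:
         f (drop_nth i (set_nth 0 vs j (rhoL (T (v i)) (v j) + rhoR (T (v j)) (v i))))).

Definition coboundary (br : g -> g -> g) (rhoL rhoR : g -> V -> V) (T : V -> g)
  (k : nat) (f : seq V -> g) : Prop :=
  exists h : seq V -> g, multilinear k.-1 h /\
    forall vs : seq V, size vs = k -> f vs = dT br rhoL rhoR T k.-1 h vs.

(* Order n deformation T_t = sum_{i<=n} Ts i t^i, written out coefficientwise
   in K[t]/(t^(n+1)). *)
Definition order_deformation (br : g -> g -> g) (rhoL rhoR : g -> V -> V)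
  (T : V -> g) (n : nat) (Ts : nat -> V -> g) : Prop :=
  Ts 0%N = T /\ (forall i, (i <= n)%N -> linear (Ts i)) /\
  forall (k : nat), (k <= n)%N -> forall u v : V,
    \sum_(0 <= i < k.+1) br (Ts i u) (Ts (k - i)%N v)
    = \sum_(0 <= i < k.+1) Ts i (rhoL (Ts (k - i)%N u) v + rhoR (Ts (k - i)%N v) u).

Definition extendable (br : g -> g -> g) (rhoL rhoR : g -> V -> V)
  (T : V -> g) (n : nat) (Ts : nat -> V -> g) : Prop :=
  exists Tn1 : V -> g, linear Tn1 /\
    order_deformation br rhoL rhoR T n.+1
      (fun i => if i == n.+1 then Tn1 else Ts i).

Definition Ob (br : g -> g -> g) (rhoL rhoR : g -> V -> V)
  (n : nat) (Ts : nat -> V -> g) (u v : V) : g :=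
  \sum_(1 <= i < n.+1)
    (br (Ts i u) (Ts (n.+1 - i)%N v)
     - Ts i (rhoL (Ts (n.+1 - i)%N u) v + rhoR (Ts (n.+1 - i)%N v) u)).

Definition Ob_cochain br rhoL rhoR n Ts : seq V -> g :=
  fun vs => Ob br rhoL rhoR n Ts (nth 0 vs 0) (nth 0 vs 1).

End LeibnizRB.

(* Only the coefficient of t^(n+1) in the deformation equation for
   T_t + T_(n+1) t^(n+1) is new.  Its summands i = 0 and i = n+1 pair T_(n+1)
   with T, the others make up Ob_T, so it reads Ob_T + d_T T_(n+1) = 0 on
   pairs (u, v).  Hence T_(n+1) exists iff Ob_T is a coboundary, namely
   d_T(-T_(n+1)). *)

From HB Require Import structures.
From mathcomp Require Import all_boot all_order all_algebra.

Set Implicit Arguments.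
Unset Strict Implicit.
Unset Printing Implicit Defensive.
Import GRing.Theory.
Local Open Scope ring_scope.

Section LinearMaps.
Variables (R : pzRingType) (A B : lmodType R) (f : A -> B).
Hypothesis f_linear : linear f.

Let fL : {linear A -> B} := HB.pack f (GRing.isLinear.Build _ _ _ _ f f_linear).

Lemma linear_raddfN : {morph f : x / - x}.
Proof. exact: (raddfN fL). Qed.

Lemma linear_raddfD : {morph f : x y / x + y}.
Proof. exact: (raddfD fL). Qed.

Lemma linear_oppf : linear (fun x => - f x).
Proof. by move=> a x y; rewrite f_linear opprD scalerN. Qed.

End LinearMaps.

Section Cochains.
Variables (K : fieldType) (g V : lmodType K).
Variables (br : g -> g -> g) (rhoL rhoR : g -> V -> V) (T : V -> g).

Definition cochain1 (f : V -> g) : seq V -> g := fun vs => f (nth 0 vs 0).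

Lemma multilinear1_cochain1 (f : V -> g) : linear f -> multilinear 1 (cochain1 f).
Proof. by move=> f_lin [|w [|? ?]] //= _ [|i] // _ a x y; rewrite /cochain1 /= f_lin. Qed.

Lemma multilinear1_linear (h : seq V -> g) :
  multilinear 1 h -> linear (fun x => h [:: x]).
Proof. by move=> h_lin a x y; exact: (h_lin [:: x] erefl 0%N isT a x y). Qed.

Lemma dT1E (h : seq V -> g) (u v : V) :
  dT br rhoL rhoR T 1 h [:: u; v] =
  br (T u) (h [:: v]) - T (rhoR (h [:: v]) u) + br (h [:: u]) (T v)
  - T (rhoL (h [:: u]) v) - h [:: rhoL (T u) v + rhoR (T v) u].
Proof.
rewrite /dT unlock /= /drop_nth /= expr0 expr1 !scale1r scaleN1r !addr0.
by rewrite -signr_odd /= expr0 scale1r !scaleN1r.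
Qed.

Lemma dT1_cochain1N (f : V -> g) (u v : V) :
  bilinear_map br -> (forall w, linear (rhoL^~ w)) ->
  (forall w, linear (rhoR^~ w)) -> linear T ->
  dT br rhoL rhoR T 1 (cochain1 (fun x => - f x)) [:: u; v]
  = - dT br rhoL rhoR T 1 (cochain1 f) [:: u; v].
Proof.
move=> [brl brr] rhoL_lin rhoR_lin T_lin; rewrite !dT1E /cochain1 /=.
rewrite (linear_raddfN (brr _)) (linear_raddfN (brl _)).
rewrite (linear_raddfN (rhoL_lin _)) (linear_raddfN (rhoR_lin _)).
by rewrite !(linear_raddfN T_lin) !opprD !opprK.
Qed.

End Cochains.

Section Deformations.
Variables (K : fieldType) (g V : lmodType K).
Variables (br : g -> g -> g) (rhoL rhoR : g -> V -> V) (T : V -> g).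

Definition deformation_term (Ts : nat -> V -> g) (k : nat) (u v : V) (i : nat) : g :=
  br (Ts i u) (Ts (k - i)%N v)
  - Ts i (rhoL (Ts (k - i)%N u) v + rhoR (Ts (k - i)%N v) u).

Definition deformation_defect (Ts : nat -> V -> g) (k : nat) (u v : V) : g :=
  \sum_(0 <= i < k.+1) deformation_term Ts k u v i.

Definition extend_deformation (Ts : nat -> V -> g) (n : nat) (Tn1 : V -> g) :
  nat -> V -> g := fun i => if i == n.+1 then Tn1 else Ts i.

Lemma deformation_defectP (Ts : nat -> V -> g) (k : nat) (u v : V) :
  \sum_(0 <= i < k.+1) br (Ts i u) (Ts (k - i)%N v)
  = \sum_(0 <= i < k.+1) Ts i (rhoL (Ts (k - i)%N u) v + rhoR (Ts (k - i)%N v) u)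
  <-> deformation_defect Ts k u v = 0.
Proof.
rewrite /deformation_defect /deformation_term sumrB.
by split=> [-> | /eqP]; [exact: subrr | rewrite subr_eq0 => /eqP].
Qed.

Lemma eq_deformation_defect (Ts Ts' : nat -> V -> g) (k : nat) (u v : V) :
  (forall i, (i <= k)%N -> Ts i = Ts' i) ->
  deformation_defect Ts k u v = deformation_defect Ts' k u v.
Proof.
move=> eq_Ts; apply: eq_big_nat => i /andP[_ le_ik].
by rewrite /deformation_term !eq_Ts ?leq_subr.
Qed.

Lemma deformation_defect_extend (Ts : nat -> V -> g) (n : nat) (Tn1 : V -> g)
    (u v : V) :
  Ts 0%N = T -> linear T ->
  deformation_defect (extend_deformation Ts n Tn1) n.+1 u v
  = Ob br rhoL rhoR n Ts u v + dT br rhoL rhoR T 1 (cochain1 Tn1) [:: u; v].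
Proof.
move=> Ts0 T_lin; rewrite /deformation_defect big_ltn // big_nat_recr //=.
have -> : \sum_(1 <= i < n.+1)
            deformation_term (extend_deformation Ts n Tn1) n.+1 u v i
          = Ob br rhoL rhoR n Ts u v.
  apply: eq_big_nat => i /andP[i_gt0 lt_in].
  have lt_sub : (n.+1 - i < n.+1)%N by rewrite ltn_subrL i_gt0.
  by rewrite /deformation_term /extend_deformation !ltn_eqF.
rewrite dT1E /deformation_term /extend_deformation /cochain1 /= subn0 subnn eqxx Ts0 /=.
rewrite (linear_raddfD T_lin) addrCA; congr (_ + _).
rewrite opprD !addrA; congr (_ - _).
by rewrite [RHS]addrAC [X in X + _ = _]addrAC.
Qed.

Lemma order_deformation_extendP (Ts : nat -> V -> g) (n : nat) (Tn1 : V -> g) :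
  order_deformation br rhoL rhoR T n Ts -> linear Tn1 ->
  order_deformation br rhoL rhoR T n.+1 (extend_deformation Ts n Tn1)
  <-> forall u v,
        Ob br rhoL rhoR n Ts u v + dT br rhoL rhoR T 1 (cochain1 Tn1) [:: u; v] = 0.
Proof.
move=> [Ts0 [Ts_lin Ts_eq]] Tn1_lin.
have T_lin : linear T by rewrite -Ts0; exact: Ts_lin.
split=> [[_ [_ ext_eq]] u v | top].
  by rewrite -deformation_defect_extend //; apply/deformation_defectP/ext_eq.
split=> //; split=> [i le_in1 | k le_kn1 u v].
  rewrite /extend_deformation; case: eqP => [// | /eqP ne_in1].
  by apply: Ts_lin; rewrite -ltnS ltn_neqAle ne_in1.
apply/deformation_defectP; case: (ltngtP k n.+1) le_kn1 => // [lt_kn _ | -> _].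
  rewrite -(@eq_deformation_defect Ts) => [|i le_ik].
    exact/deformation_defectP/Ts_eq.
  by rewrite /extend_deformation ltn_eqF // (leq_ltn_trans le_ik).
by rewrite deformation_defect_extend.
Qed.

End Deformations.

Theorem theorem3p26 (K : fieldType) (g V : lmodType K)
  (br : g -> g -> g) (rhoL rhoR : g -> V -> V) (T : V -> g)
  (n : nat) (Ts : nat -> V -> g) :
  leibniz_algebra br ->
  representation br rhoL rhoR ->
  relative_RB br rhoL rhoR T ->
  order_deformation br rhoL rhoR T n Ts ->
  (extendable br rhoL rhoR T n Ts <->
   coboundary br rhoL rhoR T 2 (Ob_cochain br rhoL rhoR n Ts)).
Proof.
move=> [br_bil _] [[rhoL_lin _] [[rhoR_lin _] _]] [T_lin _] Ts_def.
have dTN f u v := dT1_cochain1N f u v br_bil rhoL_lin rhoR_lin T_lin.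
split=> [[Tn1 [Tn1_lin]] | [h [h_lin Ob_dT]]].
  move/(order_deformation_extendP Ts_def Tn1_lin) => top.
  exists (cochain1 (fun x => - Tn1 x)).
  split=> [|[|u [|v [|? ?]]] //= _]; first exact/multilinear1_cochain1/linear_oppf.
  by rewrite dTN; apply/eqP; rewrite -addr_eq0; apply/eqP/top.
have f_lin := multilinear1_linear h_lin.
exists (fun x => - h [:: x]); split; first exact: linear_oppf.
apply/(order_deformation_extendP Ts_def (linear_oppf f_lin)) => u v.
have Ob_uv : Ob br rhoL rhoR n Ts u v = dT br rhoL rhoR T 1 h [:: u; v].
  exact: Ob_dT [:: u; v] erefl.
by rewrite dTN Ob_uv !dT1E subrr.
Qed.
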